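(* Let $a\in\mathbb N$, $N\in\mathbb N$, and let $(n_p)_{1\le p\le N}$ and $(k_p)_{1\le p\le N}$ be strictly increasing sequences in $\mathbb N$ such that, with $n_0:=0$, $k_0:=0$, $n_{N+1}:=n_N+1$, $k_{N+1}:=k_N$, $$\frac{k_p-k_{p-1}}{n_p-n_{p-1}}-\frac{k_{p+1}-k_p}{n_{p+1}-n_p}>0\qquad\forall\,1\le p\le N.$$ Define $\gamma=(\gamma_n)_{n\ge1}$ by $\gamma_n:=0$ for $n\notin\{n_1,\dots,n_N\}$ and $$\gamma_{n_p}:=\frac1a\Big(\frac{k_p-k_{p-1}}{n_p-n_{p-1}}-\frac{k_{p+1}-k_p}{n_{p+1}-n_p}\Big),\qquad 1\le p\le N.$$ Then for all $1\le p\le N$, $\check\omega_{n_p}(\gamma)=k_p/a$ and $\omega_{n_p}(\gamma)=n_p^2-2\check\omega_{n_p}(\gamma)\in\frac1a\mathbb Z$. Consequently every $u_0\in\mathrm{Iso}_\gamma:=\{u\in L^2_{r,0}:\gamma_n(u)=\gamma_n\ \forall n\ge1\}$ is a finite gap potential, the solution $t\mapsto\mathcal S(t)u_0$ of the BO equation is periodic in time with period $T=2\pi a$, and $\mathrm{Iso}_\gamma$ is entirely filled with $T$-periodic solutions.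
   Context: For real $\gamma=(\gamma_n)_{n\ge1}$ with $\sum n|\gamma_n|<\infty$: $\check\omega_n(\gamma):=\sum_{k\ge1}k\gamma_k-\sum_{k>n}(k-n)\gamma_k$ and $\omega_n(\gamma):=n^2-2\check\omega_n(\gamma)$. $\mathbb T=\mathbb R/2\pi\mathbb Z$; $H^s_{r,0}$ is the real Sobolev space of zero-mean real-valued distributions on $\mathbb T$, $L^2_{r,0}=H^0_{r,0}$. BO equation: $\partial_tu=H\partial_x^2u-\partial_x(u^2)$, $H$ the Hilbert transform (multiplier $-i\,\mathrm{sign}(n)$). $h^\sigma_+$: complex sequences with $\sum n^{2\sigma}|z_n|^2<\infty$. Known facts taken as given: for $s>-1/2$ BO is globally well posed in $H^s_{r,0}$ with solution map $\mathcal S(t)$; there is $\Phi:u\mapsto(\zeta_n(u))_{n\ge1}$, a homeomorphism $H^s_{r,0}\to h^{s+1/2}_+$ for each $s>-1/2$, with $\zeta_n(\mathcal S(t)u)=e^{i\omega_nt}\zeta_n(u)$, $\omega_n=\omega_n(\gamma(u))$, where $\gamma_n(u):=|\zeta_n(u)|^2$ (the actions). A finite gap potential is a $u$ with $\zeta_n(u)=0$ for all sufficiently large $n$. *)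

From Stdlib Require Import Reals Lra Lia ZArith.
From Coquelicot Require Import Coquelicot.
Open Scope R_scope.

(* A real sequence gamma : nat -> R, meaningful for indices n >= 1
   (gamma 0 is ignored by every definition below). *)

(* \check\omega_n(gamma) = sum_{k>=1} k gamma_k - sum_{k>n} (k-n) gamma_k *)
Definition check_omega (n : nat) (gamma : nat -> R) : R :=
  Series (fun k => INR k * gamma k)
  - Series (fun j => INR (S j) * gamma (n + S j)%nat).

Definition omega (n : nat) (gamma : nat -> R) : R :=
  INR n ^ 2 - 2 * check_omega n gamma.

Definition ext_n (N : nat) (n : nat -> nat) (p : nat) : nat :=
  if (p =? 0)%nat then 0%nat
  else if (p <=? N)%nat then n p else (n N + 1)%nat.

Definition ext_k (N : nat) (k : nat -> nat) (p : nat) : nat :=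
  if (p =? 0)%nat then 0%nat
  else if (p <=? N)%nat then k p else k N.

Definition slope (N : nat) (n k : nat -> nat) (p : nat) : R :=
  (INR (ext_k N k p) - INR (ext_k N k (p - 1))) /
  (INR (ext_n N n p) - INR (ext_n N n (p - 1))).

Definition cis (theta : R) : C := (cos theta, sin theta).

(* For a finitely supported sequence gamma, check_omega m gamma is the finite
   sum  sum_j min(j, m) gamma_j : both series defining it are finite sums, the
   map gamma |-> check_omega m gamma is additive, and on a single "spike"
   c.e_i it equals min(i, m) c.  The prescribed gamma coincides (on indices
   j >= 1) with the sum of the spikes gamma_{n_p} e_{n_p}, 1 <= p <= N, so
     a check_omega_{n_q}(gamma) = sum_p n_{min(p,q)} (s_p - s_{p+1}),
   where s_p is the slope of the polygon with vertices (n_p, k_p).  An Abel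
   summation turns the right-hand side into k_q - n_q s_{N+1} = k_q, since
   the last slope vanishes.  Hence omega_{n_q}(gamma) = (a n_q^2 - 2 k_q)/a.

   For the dynamical part, a flow acting on Birkhoff coordinates by the phases
   e^{i omega_m t} returns to its initial point after time T as soon as every
   active frequency satisfies omega_m T in 2 pi Z; with T = 2 pi a this
   follows from omega_{n_p} in Z/a, and the actions vanish beyond n_N, which
   gives the finite-gap property. *)

From Stdlib Require Import Reals ZArith Lra Lia Classical.
From Coquelicot Require Import Coquelicot.
Open Scope R_scope.

(* sum_Sn, sum_n_scal_l and sum_n_ext_loc, stated in R so that ring and lra
   apply to the results. *)
Lemma sum_Sn_R (u : nat -> R) (P : nat) : sum_n u (S P) = sum_n u P + u (S P).
Proof. exact (sum_Sn u P). Qed.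

Lemma sum_n_mult_l_R (c : R) (u : nat -> R) (P : nat) :
  sum_n (fun p => c * u p) P = c * sum_n u P.
Proof. exact (sum_n_scal_l c u P). Qed.

Lemma sum_n_ext_loc_R (u v : nat -> R) (P : nat) :
  (forall p, (p <= P)%nat -> u p = v p) -> sum_n u P = sum_n v P.
Proof. exact (sum_n_ext_loc u v P). Qed.

Lemma is_series_finite (u : nat -> R) (M : nat) :
  (forall j, (M < j)%nat -> u j = 0) -> is_series u (sum_n u M).
Proof.
  intros Hu. unfold is_series.
  apply filterlim_ext_loc with (f := fun _ => sum_n u M);
    [|apply filterlim_const].
  exists M. intros j Hj. induction j as [|j IH].
  - replace M with 0%nat by lia. reflexivity.
  - destruct (Nat.eq_dec M (S j)) as [->|HM]; [reflexivity|].
    rewrite sum_Sn, <- IH, (Hu (S j)) by lia. symmetry. apply Rplus_0_r.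
Qed.

Lemma Series_finite (u : nat -> R) (M : nat) :
  (forall j, (M < j)%nat -> u j = 0) -> Series u = sum_n u M.
Proof. intros Hu. apply is_series_unique, is_series_finite, Hu. Qed.

Lemma ex_series_finite (u : nat -> R) (M : nat) :
  (forall j, (M < j)%nat -> u j = 0) -> ex_series u.
Proof. intros Hu. exists (sum_n u M). apply is_series_finite, Hu. Qed.

Definition finitely_supported (u : nat -> R) : Prop :=
  exists M, forall j, (M < j)%nat -> u j = 0.

Lemma finitely_supported_plus (u v : nat -> R) :
  finitely_supported u -> finitely_supported v ->
  finitely_supported (fun j => u j + v j).
Proof.
  intros [M1 H1] [M2 H2]. exists (Nat.max M1 M2). intros j Hj.
  rewrite H1, H2 by lia. ring.
Qed.

Definition spike (i : nat) (c : R) (j : nat) : R := if (j =? i)%nat then c else 0.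

Lemma spike_off (i : nat) (c : R) (j : nat) : j <> i -> spike i c j = 0.
Proof. intros Hj. unfold spike. apply Nat.eqb_neq in Hj. rewrite Hj. reflexivity. Qed.

Lemma finitely_supported_spike (i : nat) (c : R) : finitely_supported (spike i c).
Proof. exists i. intros j Hj. apply spike_off. lia. Qed.

Lemma Series_spike (i : nat) (c : R) : Series (spike i c) = c.
Proof.
  rewrite (Series_finite _ i) by (intros j Hj; apply spike_off; lia).
  destruct i as [|i].
  - rewrite sum_O. unfold spike. reflexivity.
  - rewrite sum_Sn_R, (sum_n_ext_loc_R _ (fun _ => 0)).
    + rewrite sum_n_const. unfold spike. rewrite Nat.eqb_refl. ring.
    + intros j Hj. apply spike_off. lia.
Qed.

Lemma check_omega_ext (m : nat) (u v : nat -> R) :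
  (forall j, (1 <= j)%nat -> u j = v j) -> check_omega m u = check_omega m v.
Proof.
  intros Huv. unfold check_omega. f_equal; apply Series_ext.
  - intros [|j]; [simpl; ring|]. rewrite Huv by lia. reflexivity.
  - intros j. rewrite Huv by lia. reflexivity.
Qed.

Lemma omega_ext (m : nat) (u v : nat -> R) :
  (forall j, (1 <= j)%nat -> u j = v j) -> omega m u = omega m v.
Proof. intros Huv. unfold omega. rewrite (check_omega_ext m u v Huv). reflexivity. Qed.

Lemma check_omega_zero (m : nat) : check_omega m (fun _ => 0) = 0.
Proof.
  unfold check_omega.
  rewrite !(Series_finite _ 0) by (intros; ring). rewrite !sum_O. ring.
Qed.

Lemma check_omega_plus (m : nat) (u v : nat -> R) :
  finitely_supported u -> finitely_supported v ->
  check_omega m (fun j => u j + v j) = check_omega m u + check_omega m v.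
Proof.
  intros [Mu Hu] [Mv Hv]. unfold check_omega.
  assert (Eu : ex_series (fun j => INR j * u j))
    by (apply ex_series_finite with Mu; intros; rewrite Hu by lia; ring).
  assert (Ev : ex_series (fun j => INR j * v j))
    by (apply ex_series_finite with Mv; intros; rewrite Hv by lia; ring).
  assert (Eu' : ex_series (fun j => INR (S j) * u (m + S j)%nat))
    by (apply ex_series_finite with Mu; intros; rewrite Hu by lia; ring).
  assert (Ev' : ex_series (fun j => INR (S j) * v (m + S j)%nat))
    by (apply ex_series_finite with Mv; intros; rewrite Hv by lia; ring).
  rewrite (Series_ext _ (fun j => INR j * u j + INR j * v j)) by (intros; ring).
  rewrite (Series_ext (fun j => INR (S j) * (u (m + S j)%nat + v (m + S j)%nat))
    (fun j => INR (S j) * u (m + S j)%nat + INR (S j) * v (m + S j)%nat))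
    by (intros; ring).
  rewrite !Series_plus by assumption. ring.
Qed.

Lemma check_omega_spike (m i : nat) (c : R) :
  check_omega m (spike i c) = INR (Nat.min i m) * c.
Proof.
  unfold check_omega.
  rewrite (Series_ext _ (spike i (INR i * c))).
  2:{ intros j. unfold spike. destruct (Nat.eqb_spec j i) as [->|]; ring. }
  rewrite Series_spike.
  destruct (le_lt_dec i m) as [Hle|Hlt].
  - rewrite (Series_finite _ 0), sum_O, Nat.min_l by
      (lia || (intros j _; rewrite spike_off by lia; ring)).
    rewrite spike_off by lia. ring.
  - rewrite (Series_ext _ (spike (i - m - 1) (INR (i - m) * c))).
    2:{ intros j. unfold spike.
        destruct (Nat.eqb_spec (m + S j) i), (Nat.eqb_spec j (i - m - 1));
          try lia; [do 2 f_equal; lia | ring]. }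
    rewrite Series_spike, Nat.min_r, minus_INR by lia. ring.
Qed.

Fixpoint spikes (nd : nat -> nat) (c : nat -> R) (P : nat) : nat -> R :=
  match P with
  | O => fun _ => 0
  | S P' => fun j => spikes nd c P' j + spike (nd (S P')) (c (S P')) j
  end.

Lemma finitely_supported_spikes (nd : nat -> nat) (c : nat -> R) (P : nat) :
  finitely_supported (spikes nd c P).
Proof.
  induction P as [|P IH]; simpl.
  - exists 0%nat. reflexivity.
  - apply finitely_supported_plus; [exact IH | apply finitely_supported_spike].
Qed.

(* Linearity: check_omega m is sum_p min(nd p, m) c_p on a sum of spikes
   (the p = 0 term of the Coquelicot sum vanishes since nd 0 = 0). *)
Lemma check_omega_spikes (m : nat) (nd : nat -> nat) (c : nat -> R) (P : nat) :
  nd 0%nat = 0%nat ->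
  check_omega m (spikes nd c P) = sum_n (fun p => INR (Nat.min (nd p) m) * c p) P.
Proof.
  intros Hnd0. induction P as [|P IH].
  - rewrite sum_O, Hnd0. simpl. rewrite Rmult_0_l. apply check_omega_zero.
  - change (check_omega m (fun j => spikes nd c P j + spike (nd (S P)) (c (S P)) j)
      = sum_n (fun p => INR (Nat.min (nd p) m) * c p) (S P)).
    rewrite check_omega_plus, IH, check_omega_spike, sum_Sn_R;
      auto using finitely_supported_spikes, finitely_supported_spike.
Qed.

Lemma spikes_off (nd : nat -> nat) (c : nat -> R) (P j : nat) :
  (forall p, (1 <= p <= P)%nat -> nd p <> j) -> spikes nd c P j = 0.
Proof.
  induction P as [|P IH]; intros Hj; simpl; [reflexivity|].
  rewrite IH, spike_off; [ring | | intros p Hp; apply Hj; lia].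
  intros E. apply (Hj (S P)); [lia | symmetry; exact E].
Qed.

Lemma spikes_at (nd : nat -> nat) (c : nat -> R) (P q : nat) :
  (forall p p', (1 <= p <= P)%nat -> (1 <= p' <= P)%nat -> nd p = nd p' -> p = p') ->
  (1 <= q <= P)%nat -> spikes nd c P (nd q) = c q.
Proof.
  induction P as [|P IH]; intros Hinj Hq; [lia|]. simpl.
  destruct (Nat.eq_dec q (S P)) as [->|Hne].
  - rewrite spikes_off.
    + unfold spike. rewrite Nat.eqb_refl. ring.
    + intros p Hp E. assert (p = S P) by (apply Hinj; lia || auto). lia.
  - rewrite IH, spike_off; [ring | | intros; apply Hinj; lia || auto | lia].
    intros E. apply Hne, Hinj; lia || auto.
Qed.

Lemma abel_summation (x y s : nat -> R) (q P : nat) :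
  x 0%nat = 0 -> y 0%nat = 0 ->
  (forall p, (p < P)%nat -> y (S p) - y p = s (S p) * (x (S p) - x p)) ->
  sum_n (fun p => x (Nat.min p q) * (s p - s (S p))) P
  = y (Nat.min P q) - x (Nat.min P q) * s (S P) :> R.
Proof.
  intros Hx0 Hy0 Hslope. induction P as [|P IH].
  - rewrite sum_O. simpl. rewrite Hx0, Hy0. ring.
  - rewrite sum_Sn_R, IH by (intros; apply Hslope; lia).
    destruct (le_lt_dec (S P) q) as [Hle|Hlt].
    + rewrite (Nat.min_l (S P) q) by lia. rewrite (Nat.min_l P q) by lia.
      specialize (Hslope P (Nat.lt_succ_diag_r P)). lra.
    + rewrite (Nat.min_r (S P) q) by lia. rewrite (Nat.min_r P q) by lia. ring.
Qed.

Lemma increasing_on (f : nat -> nat) (lo hi : nat) :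
  (forall p, (lo <= p)%nat -> (p < hi)%nat -> (f p < f (S p))%nat) ->
  forall p q, (lo <= p)%nat -> (p < q)%nat -> (q <= hi)%nat -> (f p < f q)%nat.
Proof.
  intros Hstep p q Hp Hpq Hq. induction q as [|q IH]; [lia|].
  destruct (Nat.eq_dec p q) as [->|Hne]; [apply Hstep; lia|].
  specialize (IH ltac:(lia) ltac:(lia)). specialize (Hstep q ltac:(lia) ltac:(lia)). lia.
Qed.

Lemma cis_period (theta : R) (z : Z) : cis (theta + 2 * IZR z * PI) = cis theta.
Proof.
  unfold cis. destruct (Z_le_gt_dec 0 z) as [Hz|Hz].
  - replace (IZR z) with (INR (Z.to_nat z)) by (rewrite INR_IZR_INZ, Z2Nat.id; auto).
    rewrite cos_period, sin_period. reflexivity.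
  - assert (E : theta = (theta + 2 * IZR z * PI) + 2 * INR (Z.to_nat (- z)) * PI)
      by (rewrite INR_IZR_INZ, Z2Nat.id, opp_IZR by lia; ring).
    rewrite E at 3 4. rewrite cos_period, sin_period. reflexivity.
Qed.

Lemma flow_periodic (U : Type) (Sflow : R -> U -> U) (zeta : U -> nat -> C)
  (T : R) (u0 : U) :
  (forall u v, (forall m, (1 <= m)%nat -> zeta u m = zeta v m) -> u = v) ->
  (forall t u m, (1 <= m)%nat ->
     zeta (Sflow t u) m =
     Cmult (cis (omega m (fun j => Cmod (zeta u j) ^ 2) * t)) (zeta u m)) ->
  (forall m, (1 <= m)%nat -> zeta u0 m <> 0%C ->
     exists z : Z, omega m (fun j => Cmod (zeta u0 j) ^ 2) * T = 2 * IZR z * PI) ->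
  forall t, Sflow (t + T) u0 = Sflow t u0.
Proof.
  intros Hinj Hflow Hres t. apply Hinj. intros m Hm. rewrite !Hflow by exact Hm.
  destruct (classic (zeta u0 m = 0%C)) as [Z0|Z0].
  - rewrite Z0, !Cmult_0_r. reflexivity.
  - destruct (Hres m Hm Z0) as [z Hz].
    rewrite Rmult_plus_distr_l, Hz, cis_period. reflexivity.
Qed.

Lemma Cmod_sq_eq_0 (w : C) : Cmod w ^ 2 = 0 -> w = 0%C.
Proof. intros Hw. apply Cmod_eq_0. nra. Qed.

Lemma ext_n_inner (N : nat) (n : nat -> nat) (p : nat) :
  (1 <= p <= N)%nat -> ext_n N n p = n p.
Proof.
  intros Hp. unfold ext_n.
  destruct (Nat.eqb_spec p 0), (Nat.leb_spec p N); lia || reflexivity.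
Qed.

Lemma ext_k_inner (N : nat) (k : nat -> nat) (p : nat) :
  (1 <= p <= N)%nat -> ext_k N k p = k p.
Proof.
  intros Hp. unfold ext_k.
  destruct (Nat.eqb_spec p 0), (Nat.leb_spec p N); lia || reflexivity.
Qed.

Lemma slope_last (N : nat) (n k : nat -> nat) : (1 <= N)%nat -> slope N n k (S N) = 0.
Proof.
  intros HN. unfold slope, ext_k. replace (S N - 1)%nat with N by lia.
  destruct (Nat.eqb_spec (S N) 0), (Nat.leb_spec (S N) N),
    (Nat.eqb_spec N 0), (Nat.leb_spec N N); try lia. unfold Rdiv. ring.
Qed.

Section Frequencies.

Variables (N : nat) (n k : nat -> nat) (gamma : nat -> R).
Hypothesis Hn1 : (1 <= N)%nat -> (1 <= n 1)%nat.
Hypothesis Hninc : forall p, (1 <= p)%nat -> (p < N)%nat -> (n p < n (S p))%nat.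
Hypothesis Hgam0 : forall m, (1 <= m)%nat ->
  (forall p, (1 <= p <= N)%nat -> n p <> m) -> gamma m = 0.

Lemma ext_n_increasing (p q : nat) :
  (p < q)%nat -> (q <= N)%nat -> (ext_n N n p < ext_n N n q)%nat.
Proof.
  intros Hpq Hq. apply (increasing_on (ext_n N n) 0 N); try lia.
  intros [|r] _ Hr.
  - rewrite (ext_n_inner N n 1) by lia. change (ext_n N n 0) with 0%nat.
    pose proof (Hn1 ltac:(lia)). lia.
  - rewrite !ext_n_inner by lia. apply Hninc; lia.
Qed.

Lemma ext_n_min (p q : nat) : (p <= N)%nat -> (q <= N)%nat ->
  Nat.min (ext_n N n p) (ext_n N n q) = ext_n N n (Nat.min p q).
Proof.
  intros Hp Hq. destruct (lt_eq_lt_dec p q) as [[Hlt| ->]|Hlt].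
  - pose proof (ext_n_increasing p q Hlt Hq). rewrite !Nat.min_l; lia.
  - rewrite !Nat.min_id. reflexivity.
  - pose proof (ext_n_increasing q p Hlt Hp). rewrite !Nat.min_r; lia.
Qed.

Lemma slope_step (p : nat) : (p < N)%nat ->
  INR (ext_k N k (S p)) - INR (ext_k N k p)
  = slope N n k (S p) * (INR (ext_n N n (S p)) - INR (ext_n N n p)).
Proof.
  intros Hp. pose proof (lt_INR _ _ (ext_n_increasing p (S p) (Nat.lt_succ_diag_r p) Hp)).
  unfold slope. replace (S p - 1)%nat with p by lia. field. lra.
Qed.

Lemma gamma_spikes (j : nat) : (1 <= j)%nat ->
  gamma j = spikes (ext_n N n) (fun p => gamma (ext_n N n p)) N j.
Proof.
  intros Hj.
  assert (Hinj : forall p p', (1 <= p <= N)%nat -> (1 <= p' <= N)%nat ->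
            ext_n N n p = ext_n N n p' -> p = p').
  { intros p p' Hp Hp' E. destruct (lt_eq_lt_dec p p') as [[Hlt|]|Hlt]; auto;
      [pose proof (ext_n_increasing p p') | pose proof (ext_n_increasing p' p)]; lia. }
  destruct (classic (exists p, (1 <= p <= N)%nat /\ n p = j)) as [[p [Hp <-]]|Hno].
  - rewrite <- (ext_n_inner N n p Hp), spikes_at; auto.
  - rewrite spikes_off, Hgam0; auto.
    + intros p Hp E. apply Hno. eauto.
    + intros p Hp E. rewrite ext_n_inner in E by exact Hp. apply Hno. eauto.
Qed.

Lemma gamma_support (m : nat) : (1 <= m)%nat -> gamma m <> 0 ->
  exists p, (1 <= p <= N)%nat /\ n p = m /\ (m <= n N)%nat.
Proof.
  intros Hm Hg. apply NNPP. intros Hno. apply Hg, Hgam0; [exact Hm|].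
  intros p Hp E. apply Hno. exists p. repeat split; try lia.
  subst m. destruct (Nat.eq_dec p N) as [->|Hne]; [lia|].
  pose proof (ext_n_increasing p N). rewrite !ext_n_inner in * by lia. lia.
Qed.

Variable a : nat.
Hypothesis Ha : (0 < a)%nat.
Hypothesis Hgamp : forall p, (1 <= p <= N)%nat ->
  gamma (n p) = / INR a * (slope N n k p - slope N n k (S p)).

(* The frequency computation: a check_omega_{n_q}(gamma) = k_q, by linearity
   on spikes followed by Abel summation along the polygon. *)
Lemma check_omega_nodes (q : nat) : (1 <= q <= N)%nat ->
  check_omega (n q) gamma = INR (k q) / INR a.
Proof.
  intros Hq.
  assert (Ha' : INR a <> 0) by (apply not_0_INR; lia).
  rewrite (check_omega_ext _ _ _ gamma_spikes), check_omega_spikes by reflexivity.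
  rewrite <- (ext_n_inner N n q Hq).
  rewrite (sum_n_ext_loc_R _ (fun p => / INR a *
    (INR (ext_n N n (Nat.min p q)) * (slope N n k p - slope N n k (S p))))).
  - rewrite sum_n_mult_l_R.
    rewrite (abel_summation (fun p => INR (ext_n N n p)) (fun p => INR (ext_k N k p)))
      by (reflexivity || exact slope_step).
    rewrite Nat.min_r, slope_last, ext_k_inner by lia. field. exact Ha'.
  - intros [|p] Hp; [simpl; ring|].
    rewrite ext_n_min, (ext_n_inner N n (S p)), Hgamp by lia. ring.
Qed.

Lemma omega_nodes (q : nat) : (1 <= q <= N)%nat ->
  exists z : Z, omega (n q) gamma = IZR z / INR a.
Proof.
  intros Hq. exists (Z.of_nat a * (Z.of_nat (n q) * Z.of_nat (n q)) - 2 * Z.of_nat (k q))%Z.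
  unfold omega. rewrite check_omega_nodes by exact Hq.
  rewrite minus_IZR, !mult_IZR, <- !INR_IZR_INZ. field. apply not_0_INR. lia.
Qed.

End Frequencies.

Theorem proposition3p2
  (a N : nat) (n k : nat -> nat) (gamma : nat -> R)
  (Ha : (0 < a)%nat)
  (Hn1 : (1 <= N)%nat -> (1 <= n 1)%nat)
  (Hninc : forall p, (1 <= p)%nat -> (p < N)%nat -> (n p < n (S p))%nat)
  (Hkinc : forall p, (1 <= p)%nat -> (p < N)%nat -> (k p < k (S p))%nat)
  (Hconv : forall p, (1 <= p <= N)%nat ->
      slope N n k p - slope N n k (S p) > 0)
  (Hgam0 : forall m, (1 <= m)%nat ->
      (forall p, (1 <= p <= N)%nat -> n p <> m) -> gamma m = 0)
  (Hgamp : forall p, (1 <= p <= N)%nat ->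
      gamma (n p) = / INR a * (slope N n k p - slope N n k (S p))) :
  (forall p, (1 <= p <= N)%nat ->
      check_omega (n p) gamma = INR (k p) / INR a /\
      exists z : Z, omega (n p) gamma = IZR z / INR a)
  /\
  (* consequences, for any model of the BO flow in Birkhoff coordinates *)
  (forall (U : Type) (Sflow : R -> U -> U) (zeta : U -> nat -> C),
     (forall u v, (forall m, (1 <= m)%nat -> zeta u m = zeta v m) -> u = v) ->
     (forall t u m, (1 <= m)%nat ->
        zeta (Sflow t u) m =
        Cmult (cis (omega m (fun j => Cmod (zeta u j) ^ 2) * t)) (zeta u m)) ->
     forall u0 : U,
       (forall m, (1 <= m)%nat -> Cmod (zeta u0 m) ^ 2 = gamma m) ->
       (exists M, forall m, (M <= m)%nat -> zeta u0 m = 0%C) /\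
       (forall t, Sflow (t + 2 * PI * INR a) u0 = Sflow t u0)).
Proof.
  split.
  { intros p Hp. split.
    - exact (check_omega_nodes N n k gamma Hn1 Hninc Hgam0 a Ha Hgamp p Hp).
    - exact (omega_nodes N n k gamma Hn1 Hninc Hgam0 a Ha Hgamp p Hp). }
  intros U Sflow zeta Hinj Hflow u0 Hu0.
  assert (Hactive : forall m, (1 <= m)%nat -> zeta u0 m <> 0%C ->
            exists p, (1 <= p <= N)%nat /\ n p = m /\ (m <= n N)%nat).
  { intros m Hm Hz. apply (gamma_support N n gamma Hn1 Hninc Hgam0 m Hm).
    rewrite <- Hu0 by exact Hm. intros H. exact (Hz (Cmod_sq_eq_0 _ H)). }
  split.
  - exists (S (n N)). intros m Hm. apply NNPP. intros Hz.
    destruct (Hactive m ltac:(lia) Hz) as (p & _ & _ & Hle). lia.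
  - apply (flow_periodic U Sflow zeta _ u0 Hinj Hflow).
    intros m Hm Hz. destruct (Hactive m Hm Hz) as (p & Hp & <- & _).
    rewrite (omega_ext _ _ gamma) by (intros; apply Hu0; assumption).
    destruct (omega_nodes N n k gamma Hn1 Hninc Hgam0 a Ha Hgamp p Hp) as [z ->].
    exists z. field. apply not_0_INR. lia.
Qed.
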